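(* Let $R$ be a commutative ring of Krull dimension zero. Then every faithful $R$-module $M$ satisfies the dual of proper strong Property $\mathcal{A}$. In particular, every $R$-module $M$ satisfies the dual of proper strong Property $\mathcal{A}$ as an $R/\mathrm{Ann}_R(M)$-module.
   Context: All rings are commutative with identity. For an $R$-module $M$, $W_R(M)=\{r\in R : rM\neq M\}$. $M$ satisfies the dual of proper strong Property $\mathcal{A}$ if for every proper finitely generated ideal $I=\langle a_1,\dots,a_n\rangle$ of $R$ with $a_i\in W_R(M)$ for all $i$, we have $IM\neq M$. *)

From HB Require Import structures.
From mathcomp Require Import all_boot all_order all_algebra.
Set Implicit Arguments. Unset Strict Implicit. Unset Printing Implicit Defensive.
Import GRing.Theory.
Local Open Scope ring_scope.

Definition is_ideal (R : comNzRingType) (I : R -> Prop) : Prop :=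
  I 0 /\ (forall a b, I a -> I b -> I (a + b)) /\ (forall r a, I a -> I (r * a)).

Definition prime_ideal (R : comNzRingType) (P : R -> Prop) : Prop :=
  is_ideal P /\ ~ P 1 /\ (forall a b, P (a * b) -> P a \/ P b).

Definition maximal_ideal (R : comNzRingType) (P : R -> Prop) : Prop :=
  is_ideal P /\ ~ P 1 /\
  (forall J : R -> Prop, is_ideal J -> (forall x, P x -> J x) ->
     (forall x, J x -> P x) \/ J 1).

Definition krull_dim_zero (R : comNzRingType) : Prop :=
  forall P : R -> Prop, prime_ideal P -> maximal_ideal P.

Definition gen_ideal (R : comNzRingType) (n : nat) (a : 'I_n -> R) (x : R) : Prop :=
  exists c : 'I_n -> R, x = \sum_(i < n) c i * a i.

Definition ideal_mod (R : comNzRingType) (M : lmodType R) (n : nat)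
  (a : 'I_n -> R) (m : M) : Prop :=
  exists f : 'I_n -> M, m = \sum_(i < n) a i *: f i.

Definition W_R (R : comNzRingType) (M : lmodType R) (r : R) : Prop :=
  ~ (forall m : M, exists m' : M, m = r *: m').

Definition faithful (R : comNzRingType) (M : lmodType R) : Prop :=
  forall r : R, (forall m : M, r *: m = 0) -> r = 0.

Definition dual_proper_strong_A (R : comNzRingType) (M : lmodType R) : Prop :=
  forall (n : nat) (a : 'I_n -> R),
    ~ gen_ideal a 1 ->
    (forall i, W_R M (a i)) ->
    ~ (forall m : M, ideal_mod a m).

(* If IM = M for a proper ideal I = <a_1, ..., a_n>, take a prime P containing I.
   As dim R = 0, P is a minimal prime, so P R_P is nil: some s outside P and some k
   satisfy s a_i^k = 0 for all i.  Iterating IM = M gives M = I^N M for every N, and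
   for N large every monomial in the a_i has some exponent at least k, so s M = 0.
   Faithfulness forces s = 0, which lies in P: a contradiction. *)

From mathcomp Require Import all_boot all_order all_algebra.
From mathcomp Require Import boolp classical_sets ring.
Set Implicit Arguments. Unset Strict Implicit. Unset Printing Implicit Defensive.
Import GRing.Theory.
Local Open Scope ring_scope.
Local Open Scope classical_set_scope.

Lemma prime_ideal_notin_mul (R : comNzRingType) (P : set R) s t :
  prime_ideal P -> ~ P s -> ~ P t -> ~ P (s * t).
Proof. by move=> [_ [_ Pmul]] Ps Pt /Pmul []. Qed.

Lemma zero_ideal (R : comNzRingType) : is_ideal [set 0 : R].
Proof.
split=> [//|]; split; first by move=> x y -> ->; rewrite addr0.
by move=> r x ->; rewrite mulr0.
Qed.

Lemma gen_ideal_is_ideal (R : comNzRingType) n (a : 'I_n -> R) : is_ideal (gen_ideal a).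
Proof.
split; [|split].
- by exists (fun=> 0); rewrite big1 // => i _; rewrite mul0r.
- move=> x y [c ->] [d ->]; exists (fun i => c i + d i).
  by rewrite -big_split; apply: eq_bigr => i _; rewrite mulrDl.
- move=> r x [c ->]; exists (fun i => r * c i).
  by rewrite mulr_sumr; apply: eq_bigr => i _; rewrite mulrA.
Qed.

Lemma gen_ideal_gen (R : comNzRingType) n (a : 'I_n -> R) i : gen_ideal a (a i).
Proof.
exists (fun j => (j == i)%:R).
by rewrite (bigD1 i) //= eqxx mul1r big1 ?addr0 // => j /negbTE ->; rewrite mul0r.
Qed.

Section IdealExtension.
Variables (R : comNzRingType) (A : set R).
Hypothesis A_ideal : is_ideal A.

Definition ideal_ext (c : R) : set R := [set y + r * c | y in A & r in setT].

Lemma ideal_ext_is_ideal c : is_ideal (ideal_ext c).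
Proof.
case: A_ideal => [A0 [AD AM]]; split; [|split].
- by exists 0 => //; exists 0 => //; rewrite mul0r addr0.
- move=> _ _ [y1 Ay1 [r1 _ <-]] [y2 Ay2 [r2 _ <-]].
  by exists (y1 + y2); [exact: AD|exists (r1 + r2) => //; ring].
- move=> t _ [y Ay [r _ <-]].
  by exists (t * y); [exact: AM|exists (t * r) => //; ring].
Qed.

Lemma sub_ideal_ext c : A `<=` ideal_ext c.
Proof. by move=> x Ax; exists x => //; exists 0 => //; rewrite mul0r addr0. Qed.

Lemma ideal_ext_mem c : ideal_ext c c.
Proof. by case: A_ideal => A0 _; exists 0 => //; exists 1 => //; rewrite add0r mul1r. Qed.

End IdealExtension.

Section PrimeAvoiding.
Variables (R : comNzRingType) (I S : set R).
Hypotheses (I_ideal : is_ideal I) (S1 : S 1)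
  (S_mul : forall x y, S x -> S y -> S (x * y)) (I_S : forall x, I x -> ~ S x).

Definition avoiding (X : set R) : Prop :=
  [/\ is_ideal X, I `<=` X & forall x, X x -> ~ S x].

Lemma bigcup_chain_avoiding (F : set (set R)) X0 :
  total_on F subset -> F X0 -> avoiding X0 ->
  (forall X x, F X -> X x -> avoiding X) -> avoiding (\bigcup_(X in F) X).
Proof.
move=> Ftot FX0 [[X00 _] IX0 _] Fav; split; [split; [|split]| |].
- by exists X0.
- move=> x y [X FX Xx] [Y FY Yy].
  have [XY|YX] := Ftot X Y FX FY.
  + have [[_ [YD _]] _ _] := Fav Y y FY Yy.
    by exists Y => //; apply: YD => //; apply: XY.
  + have [[_ [XD _]] _ _] := Fav X x FX Xx.
    by exists X => //; apply: XD => //; apply: YX.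
- move=> r x [X FX Xx]; have [[_ [_ XM]] _ _] := Fav X x FX Xx.
  by exists X => //; apply: XM.
- by move=> x Ix; exists X0 => //; apply: IX0.
- by move=> x [X FX Xx]; have [_ _ XS] := Fav X x FX Xx; apply: XS.
Qed.

Lemma exists_maximal_avoiding :
  exists A, avoiding A /\ forall B, A `<` B -> ~ avoiding B.
Proof.
have I_av : avoiding I by split.
(* Zorn_bigcup also requires the union of the empty chain, so the empty set is admitted. *)
have [A [A_av A_max]] : exists A : set R,
    (A `<=` set0 \/ avoiding A) /\ forall B, A `<` B -> ~ (B `<=` set0 \/ avoiding B).
  apply: Zorn_bigcup => F F_av Ftot.
  have [[X0 FX0 X0_av]|noav] := pselect (exists2 X, F X & avoiding X).
    right; apply: (bigcup_chain_avoiding Ftot FX0 X0_av) => X x FX Xx.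
    by case: (F_av X FX) => // /(_ x Xx).
  left => x [X FX Xx]; case: (F_av X FX) => [/(_ x Xx)//|X_av].
  by apply: noav; exists X.
case: A_av => [A0|A_av].
  exfalso; apply: (A_max I); last by right.
  split=> [x /A0 //|IA]; have [[I0 _] _ _] := I_av; exact: A0 _ (IA 0 I0).
by exists A; split => // B /A_max; apply: contra_not; right.
Qed.

Lemma maximal_avoiding_prime A :
  avoiding A -> (forall B, A `<` B -> ~ avoiding B) -> prime_ideal A.
Proof.
move=> [A_ideal IA AS] A_max; split => //; split; first by move/AS.
move=> a b Aab; apply: contrapT => /not_orP [Aa Ab].
have meets c : ~ A c -> exists2 x, ideal_ext A c x & S x.
  move=> Ac; apply: contrapT => /forall2NP noS.
  apply: (A_max (ideal_ext A c)); first split.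
  - exact: sub_ideal_ext.
  - by move=> extA; apply/Ac/extA/ideal_ext_mem.
  split; [exact: ideal_ext_is_ideal| |].
  - by move=> x /IA; apply: sub_ideal_ext.
  - by move=> x xA; case: (noS x).
have [_ [y1 Ay1 [r1 _ <-]] Sx] := meets a Aa.
have [_ [y2 Ay2 [r2 _ <-]] Sy] := meets b Ab.
apply: AS (S_mul Sx Sy); have [_ [AD AM]] := A_ideal.
have -> : (y1 + r1 * a) * (y2 + r2 * b)
    = (y1 * (y2 + r2 * b) + y2 * (r1 * a)) + (r1 * r2) * (a * b) by ring.
by apply: (AD); [apply: (AD); rewrite mulrC; apply: (AM)|apply: (AM)].
Qed.

Lemma exists_prime_avoiding :
  exists P, [/\ prime_ideal P, I `<=` P & forall x, P x -> ~ S x].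
Proof.
have [A [A_av A_max]] := exists_maximal_avoiding.
have [_ IA AS] := A_av.
by exists A; split => //; apply: maximal_avoiding_prime.
Qed.

End PrimeAvoiding.

Lemma exists_prime_superideal (R : comNzRingType) (I : set R) :
  is_ideal I -> ~ I 1 -> exists2 P, prime_ideal P & I `<=` P.
Proof.
move=> I_ideal I_ne1.
have [|x y -> ->|x Ix x1|P [P_prime IP _]] := exists_prime_avoiding I_ideal (S := [set 1]).
- by [].
- by rewrite mulr1.
- by apply: I_ne1; rewrite -x1.
by exists P.
Qed.

Lemma krull_dim_zero_prime_nil (R : comNzRingType) (P : set R) x :
  krull_dim_zero R -> prime_ideal P -> P x -> exists s k, ~ P s /\ s * x ^+ k = 0.
Proof.
(* Otherwise a prime Q avoiding {s x^k | s \notin P} exists; Q lies in P, hence equals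
   P by maximality, yet misses x. *)
move=> R_dim0 P_prime Px; apply: contrapT => no_ann.
pose S y := exists s k, ~ P s /\ y = s * x ^+ k.
have [P_ideal [P_ne1 _]] := P_prime.
have S1 : S 1 by exists 1, 0%N; rewrite mulr1.
have S_mul y z : S y -> S z -> S (y * z).
  move=> [s [k [Ps ->]]] [t [l [Pt ->]]]; exists (s * t), (k + l)%N.
  by split; [exact: prime_ideal_notin_mul|rewrite exprD; ring].
have zero_S y : [set 0] y -> ~ S y.
  by move=> -> [s [k [Ps E]]]; apply: no_ann; exists s, k; split.
have [Q [Q_prime _ QS]] := exists_prime_avoiding (@zero_ideal R) S1 S_mul zero_S.
have QP : Q `<=` P.
  move=> y Qy; apply: contrapT => Py; apply: QS Qy _.
  by exists y, 0%N; rewrite expr0 mulr1.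
have [_ [_ Q_max]] := R_dim0 Q Q_prime.
have [PQ|P1] := Q_max P P_ideal QP; last by [].
by apply: QS (PQ x Px) _; exists 1, 1%N; rewrite mul1r expr1.
Qed.

Lemma krull_dim_zero_prime_nil_family (R : comNzRingType) (P : set R) n (a : 'I_n -> R) :
  krull_dim_zero R -> prime_ideal P -> (forall i, P (a i)) ->
  exists s k, ~ P s /\ forall i, s * a i ^+ k = 0.
Proof.
move=> R_dim0 P_prime Pa.
have /choice [f f_ann] : forall i, exists p : R * nat, ~ P p.1 /\ p.1 * a i ^+ p.2 = 0.
  move=> i; have [s [k ?]] := krull_dim_zero_prime_nil R_dim0 P_prime (Pa i).
  by exists (s, k).
exists (\prod_i (f i).1), (\max_i (f i).2)%N; split.
  apply: (big_ind (fun x => ~ P x)) => [|x y|i _]; last by case: (f_ann i).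
  - by case: P_prime => _ [].
  - exact: prime_ideal_notin_mul.
move=> i; rewrite (bigD1 i) //= -(subnKC (leq_bigmax i)) exprD.
have [_ fi_ann] := f_ann i.
by rewrite mulrACA fi_ann mul0r.
Qed.

Section PowerAnnihilation.
Variables (R : comNzRingType) (M : lmodType R) (n : nat) (a : 'I_n -> R).
Hypothesis IM_eq_M : forall m : M, ideal_mod a m.

Lemma scale_eq0_of_mul_gens r :
  (forall i (m : M), (r * a i) *: m = 0) -> forall m : M, r *: m = 0.
Proof.
move=> r_ann m; have [f ->] := IM_eq_M m.
by rewrite scaler_sumr big1 // => i _; rewrite scalerA.
Qed.

Definition monomial (e : 'I_n -> nat) : R := \prod_i a i ^+ e i.

Lemma monomial0 : monomial (fun=> 0%N) = 1.
Proof. by rewrite /monomial big1 // => i _; rewrite expr0. Qed.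

Lemma monomial_bump e j : monomial (fun i => e i + (i == j))%N = monomial e * a j.
Proof.
rewrite /monomial (eq_bigr (fun i => a i ^+ e i * a i ^+ (i == j))) => [|i _]; last first.
  by rewrite exprD.
rewrite big_split /=; congr (_ * _).
by rewrite (bigD1 j) //= eqxx expr1 big1 ?mulr1 // => i /negbTE ->; rewrite expr0.
Qed.

Variables (s : R) (k : nat).
Hypothesis s_ann : forall i, s * a i ^+ k = 0.

Lemma mul_monomial_eq0 e i : (k <= e i)%N -> s * monomial e = 0.
Proof.
move=> le_k_ei; rewrite /monomial (bigD1 i) //= -(subnKC le_k_ei) exprD.
by rewrite !mulrA s_ann !mul0r.
Qed.

(* Induction on the deficit sum_i (k - e_i): either some exponent has reached k,
   or every bump of e has smaller deficit and IM = M reduces to those. *)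
Lemma scale_monomial_eq0 e (m : M) : (s * monomial e) *: m = 0.
Proof.
pose deficit (e : 'I_n -> nat) := (\sum_i (k - e i))%N.
have deficit_bump e' j : (e' j < k)%N ->
    (deficit (fun i => e' i + (i == j)) < deficit e')%N.
  move=> lt_ej_k; rewrite /deficit (bigD1 j) //= [X in (_ < X)%N](bigD1 j) //= eqxx.
  rewrite (eq_bigr (fun i => k - e' i)%N) => [|i /negbTE ->]; last by rewrite addn0.
  by rewrite ltn_add2r addn1 subnSK.
elim: {e}(deficit e).+1 {-2}e (ltnSn (deficit e)) m => [//|N IH] e lt_e_N.
have [/forallP e_small|] := boolP [forall i, (e i < k)%N].
  apply: scale_eq0_of_mul_gens => j m; rewrite -mulrA -monomial_bump.
  by apply: IH; apply: leq_trans (deficit_bump e j (e_small j)) _.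
rewrite negb_forall => /existsP [i]; rewrite -leqNgt => /mul_monomial_eq0 -> m.
by rewrite scale0r.
Qed.

Lemma scale_eq0_of_pow_gens (m : M) : s *: m = 0.
Proof. by have := scale_monomial_eq0 (fun=> 0%N) m; rewrite monomial0 mulr1. Qed.

End PowerAnnihilation.

Theorem proposition3p9 (R : comNzRingType) (M : lmodType R) :
  krull_dim_zero R -> faithful M -> dual_proper_strong_A M.
Proof.
move=> R_dim0 M_faithful n a I_proper _ IM_eq_M.
have [P P_prime IP] := exists_prime_superideal (gen_ideal_is_ideal a) I_proper.
have [s [k [Ps s_ann]]] :=
  krull_dim_zero_prime_nil_family R_dim0 P_prime (fun i => IP _ (gen_ideal_gen a i)).
have sM0 : forall m : M, s *: m = 0 := scale_eq0_of_pow_gens IM_eq_M s_ann.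
by apply: Ps; rewrite (M_faithful s sM0); case: P_prime => [[]].
Qed.
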